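(* Let $n\ge 2$ and let $X_{a_1\cdots a_n}=X_{(a_1\cdots a_n)}$ be an affine tensor field on Minkowski spacetime $(\mathbb R^4,\eta)$, written in standard rectangular coordinates. Then $$\partial_r\partial_sX_{a_1\cdots a_n}=\frac{n(n-1)}{2}\partial_{(a_1}\partial_{a_2}X_{a_3\cdots a_n)rs},$$ with symmetrization over $a_1,\dots,a_n$ only.
   Context: Parentheses around indices denote symmetrization with weight one. A totally symmetric tensor field $X_{a_1\cdots a_n}$ on a pseudo-Riemannian manifold with Levi-Civita connection $\nabla$ is an affine tensor if $\nabla_b\nabla_{(c}X_{a_1\cdots a_n)}=0$; in rectangular coordinates on Minkowski spacetime $\nabla=\partial$. *)

From Stdlib Require Import Reals ClassicalEpsilon.
From mathcomp Require Import all_boot all_fingroup.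
Set Implicit Arguments. Unset Strict Implicit. Unset Printing Implicit Defensive.
Local Open Scope R_scope.

Definition pt := 'I_4 -> R.

Definition upd (p : pt) (i : 'I_4) (t : R) : pt :=
  fun j => if j == i then t else p j.

(* Partial derivative  d_i f  at p (chosen by epsilon; meaningful when it exists). *)
Definition pd (i : 'I_4) (f : pt -> R) : pt -> R :=
  fun p => epsilon (inhabits 0)
    (fun l => derivable_pt_lim (fun t => f (upd p i t)) (p i) l).

Fixpoint pds (l : seq 'I_4) (f : pt -> R) : pt -> R :=
  match l with
  | [::] => f
  | i :: l' => pd i (pds l' f)
  end.

Definition cont4 (f : pt -> R) : Prop :=
  forall p eps, 0 < eps -> exists delta, 0 < delta /\
    forall q, (forall j, Rabs (q j - p j) < delta) -> Rabs (f q - f p) < eps.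

Definition smooth (f : pt -> R) : Prop :=
  forall l : seq 'I_4, cont4 (pds l f) /\
    forall (i : 'I_4) (p : pt),
      derivable_pt_lim (fun t => pds l f (upd p i t)) (p i) (pd i (pds l f) p).

(* A rank-n covariant tensor field: components X a, a : 'I_n -> 'I_4. *)
Definition tfield (n : nat) := ('I_n -> 'I_4) -> pt -> R.

Definition sum_perm (m : nat) (F : 'S_m -> R) : R := \big[Rplus/0]_(s : 'S_m) F s.

Definition totally_symmetric (n : nat) (X : tfield n) : Prop :=
  forall (a : 'I_n -> 'I_4) (s : 'S_n), X (fun i => a (s i)) = X a.

(* Affine: d_b d_{(c} X_{a_1 ... a_n)} = 0, where e = (c, a_1, ..., a_n)
   and the symmetrization has weight one (factor 1/(n+1)!). *)
Definition affine (n : nat) (X : tfield n) : Prop :=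
  forall (b : 'I_4) (e : 'I_n.+1 -> 'I_4) (p : pt),
    / INR (n.+1)`! *
      sum_perm (fun s : 'S_n.+1 =>
        pd b (pd (e (s ord0)) (X (fun i : 'I_n => e (s (lift ord0 i))))) p) = 0.

(* k-th entry (0-based, as a nat) of an index list a : 'I_n -> 'I_4 (default 0). *)
Definition getidx (n : nat) (a : 'I_n -> 'I_4) (k : nat) : 'I_4 :=
  oapp a (ord0 : 'I_4) (insub k).

(* Index list (a_{s(2)}, ..., a_{s(n-1)}, r, t) of length n. *)
Definition tailidx (n : nat) (a : 'I_n -> 'I_4) (s : 'S_n) (r t : 'I_4) : 'I_n -> 'I_4 :=
  fun k => if (val k < n - 2)%N then getidx (fun i => a (s i)) (val k + 2)
           else if (val k == n - 2)%N then r else t.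

From HB Require Import structures.
From Stdlib Require Import Reals Lra FunctionalExtensionality.
From mathcomp Require Import all_boot all_fingroup.
Set Implicit Arguments. Unset Strict Implicit.
Local Open Scope R_scope.

(* Write  D_{bc}[l] := d_b d_c X_l (at a fixed point p), where l is a list of
   n indices; by total symmetry it depends only on the multiset of l.
   1. Analysis: for smooth f, d_b d_c f = d_c d_b f (Schwarz/Clairaut).  This
      is proved for functions of two real variables from a double mean value
      theorem, and transported to R^4 along coordinate planes.
   2. The affine condition, averaged over S_{n+1}, says that for every list E
      of n+1 indices  sum_{x in E} D_{bx}[E - x] = 0.  Applied to E = c :: l
      it exchanges an index: D_{bc}[l] = - sum_{x in l} D_{bx}[c :: l - x].
   3. Exchanging r and then t in D_{rt}[A], using Clairaut, gives
        2 D_{rt}[A] = sum over ordered pairs (x, y) of distinct positions of A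
                      of D_{xy}[r :: t :: A - x - y].
   4. Counting permutations: sum_s W(s 0, s 1) = n!/(n(n-1)) * sum_{i<>j} W(i,j),
      and the summand of the theorem is W(s 0, s 1) by symmetry of X; the
      theorem follows by combining 3 and 4. *)

Lemma mvt_signed (f f' : R -> R) (x h : R) : h <> 0 ->
  (forall c, derivable_pt_lim f c (f' c)) ->
  exists c, f (x + h) - f x = f' c * h /\ Rabs (c - x) < Rabs h.
Proof.
move=> h_neq0 f_deriv.
have [h_gt0 | h_lt0] : 0 < h \/ h < 0 by lra.
- have [c [E Hc]] := MVT_cor2 f f' x (x + h) ltac:(lra) (fun c _ => f_deriv c).
  exists c; split; first by rewrite E; ring.
  by rewrite !Rabs_right; lra.
- have [c [E Hc]] := MVT_cor2 f f' (x + h) x ltac:(lra) (fun c _ => f_deriv c).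
  exists c; split; first by have : f x - f (x + h) = f' c * (x - (x + h)) := E; lra.
  by rewrite Rabs_left; [rewrite Rabs_left|]; lra.
Qed.

Lemma derivative_bound (F : R -> R) (y0 D M e d : R) :
  derivable_pt_lim F y0 D -> 0 < d ->
  (forall y, y <> y0 -> Rabs (y - y0) < d ->
     Rabs ((F y - F y0) / (y - y0) - M) <= e) ->
  Rabs (D - M) <= e.
Proof.
move=> F_deriv d_gt0 quot_close; apply: Rle_plus_epsilon => eps eps_gt0.
have [delta quot_lim] := F_deriv eps eps_gt0.
have [m [m_gt0 m_le_delta m_le_d]] : exists m, [/\ 0 < m, m <= delta & m <= d].
  exists (Rmin delta d); split; [| exact: Rmin_l | exact: Rmin_r].
  exact: (Rmin_pos _ _ (cond_pos delta) d_gt0).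
pose k := m / 2.
have k_gt0 : 0 < k by rewrite /k; lra.
have k_small : Rabs k < delta /\ Rabs k < d by rewrite Rabs_right /k; [split|]; lra.
have near_D := quot_lim k ltac:(lra) (proj1 k_small).
have near_M := quot_close (y0 + k) ltac:(lra) ltac:(by rewrite Rplus_minus_l; case: k_small).
rewrite Rplus_minus_l in near_M.
have -> : D - M = (D - (F (y0 + k) - F y0) / k) + ((F (y0 + k) - F y0) / k - M) by ring.
apply: Rle_trans (Rabs_triang _ _) _.
by rewrite Rabs_minus_sym in near_D; lra.
Qed.

Section Schwarz.
Variables (g gx gy gxy : R -> R -> R) (x0 y0 : R).
Hypothesis g_dx : forall x y, derivable_pt_lim (fun s => g s y) x (gx x y).
Hypothesis g_dy : forall x y, derivable_pt_lim (fun t => g x t) y (gy x y).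
Hypothesis gx_dy : forall x y, derivable_pt_lim (fun t => gx x t) y (gxy x y).
Hypothesis gxy_cont : forall eps, 0 < eps -> exists d, 0 < d /\ forall x y,
  Rabs (x - x0) < d -> Rabs (y - y0) < d -> Rabs (gxy x y - gxy x0 y0) < eps.

Lemma mixed_difference h y : h <> 0 -> y <> y0 ->
  exists xi eta, [/\ Rabs (xi - x0) < Rabs h, Rabs (eta - y0) < Rabs (y - y0) &
    g (x0 + h) y - g (x0 + h) y0 - (g x0 y - g x0 y0) = gxy xi eta * (h * (y - y0))].
Proof.
move=> h_neq0 y_neq0.
have [xi [Exi xi_close]] := mvt_signed x0 h_neq0
  (fun s => derivable_pt_lim_minus _ _ _ _ _ (g_dx s y) (g_dx s y0)).
have [eta [Eeta eta_close]] := mvt_signed y0 (Rminus_eq_contra _ _ y_neq0) (gx_dy xi).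
rewrite Rplus_minus in Eeta.
exists xi, eta; split => //.
by move: Exi => /= ->; rewrite Eeta; ring.
Qed.

Lemma schwarz : derivable_pt_lim (fun x => gy x y0) x0 (gxy x0 y0).
Proof.
move=> eps eps_gt0.
have [d [d_gt0 gxy_near]] := gxy_cont (eps := eps / 2) ltac:(lra).
exists (mkposreal d d_gt0) => h h_neq0 /= h_small.
pose F y := / h * (g (x0 + h) y - g x0 y).
have F_deriv : derivable_pt_lim F y0 (/ h * (gy (x0 + h) y0 - gy x0 y0)).
  exact: (derivable_pt_lim_scal _ _ _ _
            (derivable_pt_lim_minus _ _ _ _ _ (g_dy (x0 + h) y0) (g_dy x0 y0))).
have F_quot : forall y, y <> y0 -> Rabs (y - y0) < d ->
    Rabs ((F y - F y0) / (y - y0) - gxy x0 y0) <= eps / 2.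
  move=> y y_neq0 y_small.
  have [xi [eta [xi_close eta_close Delta]]] := mixed_difference h_neq0 y_neq0.
  have -> : (F y - F y0) / (y - y0) = gxy xi eta.
    have y_y0 : y - y0 <> 0 by apply: Rminus_eq_contra.
    rewrite /F -Rmult_minus_distr_l (_ : _ - _ = gxy xi eta * (h * (y - y0))); last first.
      by rewrite -Delta; ring.
    by field.
  by apply: Rlt_le; apply: gxy_near; lra.
have := derivative_bound F_deriv d_gt0 F_quot.
by rewrite /Rdiv Rmult_comm; lra.
Qed.

End Schwarz.

Lemma upd_same (p : pt) i x : upd p i x i = x.
Proof. by rewrite /upd eqxx. Qed.

Lemma upd_other (p : pt) i x j : j != i -> upd p i x j = p j.
Proof. by rewrite /upd => /negbTE ->. Qed.

Lemma upd_id (p : pt) i : upd p i (p i) = p.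
Proof. by apply: functional_extensionality => j; rewrite /upd; case: eqP => [->|]. Qed.

Lemma upd_upd (p : pt) i x y : upd (upd p i x) i y = upd p i y.
Proof. by apply: functional_extensionality => j; rewrite /upd; case: eqP. Qed.

Lemma upd_swap (p : pt) i j x y :
  i != j -> upd (upd p i x) j y = upd (upd p j y) i x.
Proof.
move=> ij; apply: functional_extensionality => k; rewrite /upd.
by case: eqP => [->|//]; rewrite eq_sym (negbTE ij).
Qed.

Definition has_partial (i : 'I_4) (F : pt -> R) : Prop :=
  forall q, derivable_pt_lim (fun s => F (upd q i s)) (q i) (pd i F q).

Lemma smooth_partial f l i : smooth f -> has_partial i (pds l f).
Proof. by move=> f_smooth q; case: (f_smooth l) => _; apply. Qed.

Section CoordinatePlane.
Variables (p : pt) (b c : 'I_4).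
Hypothesis bc : b != c.

Definition plane (x y : R) : pt := upd (upd p b x) c y.

Lemma plane_b x y : plane x y b = x.
Proof. by rewrite /plane upd_other // upd_same. Qed.

Lemma plane_c x y : plane x y c = y.
Proof. exact: upd_same. Qed.

Lemma upd_plane_b x y s : upd (plane x y) b s = plane s y.
Proof. by rewrite /plane -upd_swap // upd_upd. Qed.

Lemma upd_plane_c x y t : upd (plane x y) c t = plane x t.
Proof. exact: upd_upd. Qed.

Lemma plane_axis x : plane x (p c) = upd p b x.
Proof. by rewrite /plane -(@upd_other p b x c) 1?eq_sym // upd_id. Qed.

Lemma plane_center : plane (p b) (p c) = p.
Proof. by rewrite plane_axis upd_id. Qed.

Lemma plane_near x y d : Rabs (x - p b) < d -> Rabs (y - p c) < d ->
  forall j, Rabs (plane x y j - p j) < d.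
Proof.
move=> x_near y_near j; case: (eqVneq j c) => [-> | jc]; first by rewrite plane_c.
case: (eqVneq j b) => [-> | jb]; first by rewrite plane_b.
rewrite /plane !upd_other // Rminus_diag Rabs_R0.
exact: Rle_lt_trans (Rabs_pos _) x_near.
Qed.

Lemma plane_deriv_b F : has_partial b F ->
  forall x y, derivable_pt_lim (fun s => F (plane s y)) x (pd b F (plane x y)).
Proof.
move=> F_deriv x y; have := F_deriv (plane x y); rewrite plane_b.
congr derivable_pt_lim; apply: functional_extensionality => s.
by rewrite upd_plane_b.
Qed.

Lemma plane_deriv_c F : has_partial c F ->
  forall x y, derivable_pt_lim (fun t => F (plane x t)) y (pd c F (plane x y)).
Proof.
move=> F_deriv x y; have := F_deriv (plane x y); rewrite plane_c.
congr derivable_pt_lim; apply: functional_extensionality => t.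
by rewrite upd_plane_c.
Qed.

End CoordinatePlane.

Lemma clairaut f b c p : smooth f -> pd b (pd c f) p = pd c (pd b f) p.
Proof.
move=> f_smooth; case: (eqVneq b c) => [-> // | bc].
apply: (uniqueness_limite (fun x => pd c f (upd p b x)) (p b)).
  exact: (smooth_partial [:: c] b f_smooth).
have gxy_cont : forall eps, 0 < eps -> exists d, 0 < d /\ forall x y,
    Rabs (x - p b) < d -> Rabs (y - p c) < d ->
    Rabs (pd c (pd b f) (plane p b c x y) - pd c (pd b f) (plane p b c (p b) (p c))) < eps.
  move=> eps eps_gt0; rewrite plane_center //.
  have [d [d_gt0 near]] := proj1 (f_smooth [:: c; b]) p eps eps_gt0.
  by exists d; split => // x y x_near y_near; apply/near/plane_near.
have := schwarz (plane_deriv_b p bc (smooth_partial [::] b f_smooth))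
  (plane_deriv_c p b (smooth_partial [::] c f_smooth))
  (plane_deriv_c p b (smooth_partial [:: b] c f_smooth)) gxy_cont.
rewrite plane_center //; congr derivable_pt_lim; apply: functional_extensionality => x.
by rewrite plane_axis.
Qed.

Lemma Rplus_assoc_law : associative Rplus.
Proof. by move=> x y z; rewrite Rplus_assoc. Qed.

HB.instance Definition _ :=
  Monoid.isComLaw.Build R 0 Rplus Rplus_assoc_law Rplus_comm Rplus_0_l.

Lemma big_Ropp (I : Type) (r : seq I) (P : pred I) (F : I -> R) :
  \big[Rplus/0]_(i <- r | P i) - F i = - \big[Rplus/0]_(i <- r | P i) F i.
Proof. by rewrite (big_morph Ropp Ropp_plus_distr Ropp_0). Qed.

Lemma big_Rconst (T : finType) (c : R) : \big[Rplus/0]_(i : T) c = INR #|T| * c.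
Proof.
rewrite big_const; elim: #|T| => [|k IH]; first by rewrite /=; ring.
by rewrite iterS IH S_INR; ring.
Qed.

Lemma INR_fact_neq0 k : INR k`! <> 0.
Proof. by apply: not_0_INR => fact0; have := fact_gt0 k; rewrite fact0. Qed.

Lemma sum_perm_image m (G : 'I_m -> R) (s : 'S_m) :
  \big[Rplus/0]_(k : 'I_m) G (s k) = \big[Rplus/0]_(k : 'I_m) G k.
Proof. by rewrite [RHS](reindex_inj (@perm_inj _ s)). Qed.

(* Each point is hit (m-1)! times by s -> s i: averaging over S_m at one point. *)
Lemma sum_perm_at m (G : 'I_m -> R) (i : 'I_m) :
  INR m * \big[Rplus/0]_(s : 'S_m) G (s i) = INR m`! * \big[Rplus/0]_(k : 'I_m) G k.
Proof.
have at_any k : \big[Rplus/0]_(s : 'S_m) G (s k) = \big[Rplus/0]_(s : 'S_m) G (s i).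
  rewrite [RHS](reindex_inj (mulgI (tperm i k))).
  by apply: eq_bigr => s _; rewrite permM tpermL.
have -> : INR m * \big[Rplus/0]_(s : 'S_m) G (s i) =
    \big[Rplus/0]_(k : 'I_m) \big[Rplus/0]_(s : 'S_m) G (s k).
  by rewrite (eq_bigr _ (fun k _ => at_any k)) big_Rconst card_ord.
rewrite exchange_big /= (eq_bigr _ (fun s _ => sum_perm_image G s)).
by rewrite big_Rconst card_Sn.
Qed.

Lemma big_Rconst_neq m (k : 'I_m) (c : R) :
  \big[Rplus/0]_(l | l != k) c = (INR m - 1) * c.
Proof.
have := big_Rconst 'I_m c; rewrite (bigD1 k) //= card_ord.
by move=> sum_all; lra.
Qed.

Lemma perm_two_points m (i j i' j' : 'I_m) :
  i != j -> i' != j' -> exists pi : 'S_m, pi i' = i /\ pi j' = j.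
Proof.
move=> ij i'j'; set u := tperm i' i j'.
have ui : u != i by rewrite -(tpermL i' i) (inj_eq perm_inj) eq_sym.
have ji : j != i by rewrite eq_sym.
by exists (tperm i' i * tperm u j)%g; rewrite !permM tpermL (tpermD ui ji) -/u tpermL.
Qed.

Lemma sum_pairs_image m (W : 'I_m -> 'I_m -> R) (s : 'S_m) :
  \big[Rplus/0]_(k : 'I_m) \big[Rplus/0]_(l | l != k) W (s k) (s l) =
  \big[Rplus/0]_(k : 'I_m) \big[Rplus/0]_(l | l != k) W k l.
Proof.
rewrite [RHS](reindex_inj (@perm_inj _ s)); apply: eq_bigr => k _.
rewrite [RHS](reindex_inj (@perm_inj _ s)); apply: eq_bigl => l.
by rewrite (inj_eq (@perm_inj _ s)).
Qed.

(* Averaging over S_m at a pair of distinct points: each ordered pair of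
   distinct points is hit (m-2)! times by s -> (s i, s j). *)
Lemma sum_perm_at2 m (W : 'I_m -> 'I_m -> R) (i j : 'I_m) : i != j ->
  INR m * (INR m - 1) * \big[Rplus/0]_(s : 'S_m) W (s i) (s j) =
  INR m`! * \big[Rplus/0]_(k : 'I_m) \big[Rplus/0]_(l | l != k) W k l.
Proof.
move=> ij; set S := \big[Rplus/0]_(s : 'S_m) W (s i) (s j).
have at_any k l : l != k -> \big[Rplus/0]_(s : 'S_m) W (s k) (s l) = S.
  rewrite eq_sym => kl; have [pi [pik pjl]] := perm_two_points kl ij.
  rewrite /S [RHS](reindex_inj (mulgI pi)).
  by apply: eq_bigr => s _; rewrite !permM pik pjl.
have -> : INR m * (INR m - 1) * S = \big[Rplus/0]_(k : 'I_m)
    \big[Rplus/0]_(l | l != k) \big[Rplus/0]_(s : 'S_m) W (s k) (s l).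
  rewrite (eq_bigr (fun _ => (INR m - 1) * S)) ?big_Rconst ?card_ord; first ring.
  by move=> k _; rewrite (eq_bigr _ (fun l => at_any k l)) big_Rconst_neq.
rewrite (eq_bigr _ (fun k _ => exchange_big _ _ _ _ _ _)) exchange_big /=.
by rewrite (eq_bigr _ (fun s _ => sum_pairs_image W s)) big_Rconst card_Sn.
Qed.

Definition idx_of (n : nat) (l : seq 'I_4) : 'I_n -> 'I_4 := fun i => nth ord0 l i.

Lemma idx_of_enum n (a : 'I_n -> 'I_4) : idx_of (map a (enum 'I_n)) = a.
Proof.
apply: functional_extensionality => i.
by rewrite /idx_of (nth_map i) ?size_enum_ord // nth_ord_enum.
Qed.

Lemma enum_idx_of n l : size l = n -> map (@idx_of n l) (enum 'I_n) = l.
Proof.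
move=> size_l; apply: (@eq_from_nth _ ord0); first by rewrite size_map size_enum_ord.
move=> k; rewrite size_map size_enum_ord => k_lt.
by rewrite (nth_map (Ordinal k_lt)) ?size_enum_ord // (nth_ord_enum _ (Ordinal k_lt)).
Qed.

Lemma perm_rem_cons (T : eqType) (x : T) (A B : seq T) :
  perm_eq A (x :: B) -> perm_eq (rem x A) B.
Proof.
move=> AxB; have xA : x \in A by rewrite (perm_mem AxB) mem_head.
by rewrite -(perm_cons x); apply: perm_trans AxB; rewrite perm_sym perm_to_rem.
Qed.

Lemma rem_cons_perm (T : eqType) (x y : T) s :
  x \in s -> perm_eq (rem x (y :: s)) (y :: rem x s).
Proof.
move=> xs; apply: perm_rem_cons.
by rewrite perm_sym (perm_catCA [:: x] [:: y]) /= perm_cons perm_sym perm_to_rem.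
Qed.

Lemma size_cons_rem (T : eqType) (x y : T) s :
  x \in s -> size (y :: rem x s) = size s.
Proof. by move=> xs; rewrite [LHS]/= size_rem //; case: s xs. Qed.

Lemma perm_enum_image (A : finType) (T : eqType) (s : {perm A}) (e : A -> T) :
  perm_eq (map (e \o s) (enum A)) (map e (enum A)).
Proof.
rewrite map_comp; apply: perm_map; apply: uniq_perm.
- by rewrite map_inj_uniq ?enum_uniq //; exact: perm_inj.
- exact: enum_uniq.
move=> x; rewrite mem_enum; apply/mapP; exists (s^-1 x)%g; first by rewrite mem_enum.
by rewrite permKV.
Qed.

Lemma symmetric_perm n (X : tfield n) (l l' : seq 'I_4) :
  totally_symmetric X -> size l = n -> perm_eq l l' -> X (idx_of l) = X (idx_of l').
Proof.
move=> Xsym size_l ll'; have size_l' : size l' == n by rewrite -(perm_size ll') size_l.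
have /tuple_permP [s ->] : perm_eq l (Tuple size_l') by [].
rewrite -[RHS](Xsym _ s); congr X; apply: functional_extensionality => i.
by rewrite /idx_of (nth_map i) ?size_enum_ord // nth_ord_enum (tnth_nth ord0).
Qed.

Section AffineSums.
Variables (n : nat) (X : tfield n) (p : pt).
Hypothesis Xsmooth : forall a, smooth (X a).
Hypothesis Xsym : totally_symmetric X.
Hypothesis Xaff : affine X.

Definition dd (b c : 'I_4) (l : seq 'I_4) : R := pd b (pd c (X (idx_of l))) p.

Lemma dd_perm b c l l' : size l = n -> perm_eq l l' -> dd b c l = dd b c l'.
Proof. by move=> size_l ll'; rewrite /dd (symmetric_perm Xsym size_l ll'). Qed.

Lemma dd_sym b c l : dd b c l = dd c b l.
Proof. exact: clairaut. Qed.

Lemma affine_sum b E : size E = n.+1 ->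
  \big[Rplus/0]_(x <- E) dd b x (rem x E) = 0.
Proof.
move=> size_E; pose e := @idx_of n.+1 E.
pose G k := dd b (e k) (rem (e k) E).
have sum_G_first : \big[Rplus/0]_(s : 'S_n.+1) G (s ord0) = 0.
  have /Rmult_integral [inv0 | sum0] := Xaff b e p.
    by case: (Rinv_neq_0_compat _ (@INR_fact_neq0 n.+1) inv0).
  rewrite -[RHS]sum0; apply: eq_bigr => s _.
  rewrite /G /dd -(idx_of_enum (fun i => e (s (lift ord0 i)))).
  congr (pd b (pd _ _) p); apply: symmetric_perm => //.
    by rewrite size_rem ?size_E // -(enum_idx_of size_E) map_f ?mem_enum.
  apply: perm_rem_cons; rewrite -[in L in perm_eq L](enum_idx_of size_E) perm_sym.
  by have := perm_enum_image s e; rewrite enum_ordSl /= -map_comp.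
have := sum_perm_at G ord0; rewrite sum_G_first Rmult_0_r.
move=> /esym /Rmult_integral [fact0 | sum_G]; first by case: (INR_fact_neq0 fact0).
by rewrite -{1}(enum_idx_of size_E) big_map big_enum.
Qed.

Lemma affine_exchange b c l : size l = n ->
  dd b c l = - \big[Rplus/0]_(x <- l) dd b x (c :: rem x l).
Proof.
move=> size_l; have := affine_sum b (E := c :: l) ltac:(by rewrite /= size_l).
rewrite big_cons [rem c _]/= eqxx (eq_big_seq (fun x => dd b x (c :: rem x l))).
  by move=> sum0; apply: Rplus_opp_r_uniq; rewrite Rplus_comm.
move=> x xl; apply: dd_perm; last exact: rem_cons_perm.
by rewrite size_rem /= ?inE ?xl ?orbT ?size_l.
Qed.

(* Step 3 of the plan: exchanging r, then t. *)
Lemma twice_dd r t A : size A = n ->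
  2 * dd r t A = \big[Rplus/0]_(x <- A) \big[Rplus/0]_(y <- rem x A)
                   dd x y (r :: t :: rem y (rem x A)).
Proof.
move=> size_A.
have inner x : x \in A -> dd x r (t :: rem x A) + dd x t (r :: rem x A) =
    - \big[Rplus/0]_(y <- rem x A) dd x y (r :: t :: rem y (rem x A)).
  move=> xA; set B := rem x A.
  have size_tB : size (t :: B) = n by rewrite size_cons_rem.
  rewrite (affine_exchange x r size_tB) big_cons [rem t _]/= eqxx.
  rewrite [S in - (_ + S)](eq_big_seq (fun y => dd x y (r :: t :: rem y B))).
    by rewrite Ropp_plus_distr Rplus_comm -Rplus_assoc Rplus_opp_r Rplus_0_l.
  move=> y yB; apply: dd_perm; first by rewrite size_cons_rem ?inE ?yB ?orbT.
  by rewrite perm_cons rem_cons_perm.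
rewrite -[2]/(1 + 1) Rmult_plus_distr_r Rmult_1_l {2}dd_sym.
rewrite !affine_exchange // -Ropp_plus_distr -big_split -big_Ropp /=.
apply: eq_big_seq => x xA.
by rewrite (dd_sym r) (dd_sym t) inner // Ropp_involutive.
Qed.
End AffineSums.

Lemma sum_distinct_pairs (I : finType) (T : eqType) (a : I -> T) (H : T -> T -> R) :
  \big[Rplus/0]_(x <- map a (enum I)) \big[Rplus/0]_(y <- rem x (map a (enum I))) H x y =
  \big[Rplus/0]_(i : I) \big[Rplus/0]_(j | j != i) H (a i) (a j).
Proof.
rewrite big_map big_enum; apply: eq_bigr => i _.
have ai_in : a i \in map a (enum I) by rewrite map_f ?mem_enum.
have := perm_big (op := Rplus) (x := 0) (P := predT) (F := H (a i)) _ (perm_to_rem ai_in).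
by rewrite big_cons big_map big_enum (bigD1 i) //= => /Rplus_eq_reg_l/esym.
Qed.

Lemma getidx_inord m (f : 'I_m.+1 -> 'I_4) k : (k < m.+1)%N -> getidx f k = f (inord k).
Proof.
move=> k_lt; rewrite /getidx insubT /=; congr f.
by apply: val_inj; rewrite /= inordK.
Qed.

Lemma map_enum_iota m (T : Type) (e : 'I_m.+1 -> T) :
  map e (enum 'I_m.+1) = map (fun k => e (inord k)) (iota 0 m.+1).
Proof. by rewrite -val_enum_ord -map_comp; apply: eq_map => i /=; rewrite inord_val. Qed.

Lemma enum_image_split m (T : Type) (e : 'I_m.+2 -> T) :
  map e (enum 'I_m.+2) = e (inord 0) :: e (inord 1) :: map (fun k => e (inord k.+2)) (iota 0 m).
Proof.
rewrite map_enum_iota /= (iotaDl 2 0 m) -map_comp.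
by congr (_ :: _ :: _); apply: eq_map => k /=; rewrite add2n.
Qed.

Lemma tailidx_enum m (a : 'I_m.+2 -> 'I_4) (s : 'S_m.+2) (r t : 'I_4) :
  map (tailidx a s r t) (enum 'I_m.+2) =
  map (fun k => a (s (inord k.+2))) (iota 0 m) ++ [:: r; t].
Proof.
have val_inord k : (k < m.+2)%N -> val (inord k : 'I_m.+2) = k by exact: inordK.
have iota_m2 : iota 0 m.+2 = iota 0 m ++ [:: m; m.+1] by rewrite -addn2 iotaD.
rewrite map_enum_iota iota_m2 map_cat /tailidx !subSS subn0; congr (_ ++ _).
  apply/eq_in_map => k; rewrite mem_iota add0n => /andP[_ k_lt].
  rewrite val_inord ?k_lt ?getidx_inord ?addn2 //.
  by rewrite (ltn_trans k_lt) // ltnS leqW.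
by rewrite /= !val_inord // ltnn eqxx ltnNge leqnSn /= eqn_leq ltnn.
Qed.

Lemma tailidx_perm m (a : 'I_m.+2 -> 'I_4) (s : 'S_m.+2) (r t : 'I_4) :
  perm_eq (map (tailidx a s r t) (enum 'I_m.+2))
    (r :: t :: rem (a (s (inord 1))) (rem (a (s (inord 0))) (map a (enum 'I_m.+2)))).
Proof.
set T := map (fun k => a (s (inord k.+2))) (iota 0 m).
have a_split : perm_eq (map a (enum 'I_m.+2)) (a (s (inord 0)) :: a (s (inord 1)) :: T).
  by rewrite -(enum_image_split (a \o s)) perm_sym perm_enum_image.
rewrite tailidx_enum perm_catC /= !perm_cons perm_sym.
exact: perm_rem_cons (perm_rem_cons a_split).
Qed.

Theorem mainTheorem3 (n : nat) (hn : (2 <= n)%N) (X : tfield n)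
    (Xsmooth : forall a, smooth (X a))
    (Xsym : totally_symmetric X)
    (Xaff : affine X) :
  forall (r t : 'I_4) (a : 'I_n -> 'I_4) (p : pt),
    pd r (pd t (X a)) p =
      INR n * (INR n - 1) / 2 *
      (/ INR n`! *
        sum_perm (fun s : 'S_n =>
          pd (getidx (fun i => a (s i)) 0) (pd (getidx (fun i => a (s i)) 1)
            (X (tailidx a s r t))) p)).
Proof.
case: n hn X Xsmooth Xsym Xaff => [|[|m]] // _ X Xsmooth Xsym Xaff r t a p.
set A := map a (enum 'I_m.+2).
pose W i j := dd X p (a i) (a j) (r :: t :: rem (a j) (rem (a i) A)).
have summand (s : 'S_m.+2) : pd (getidx (fun i => a (s i)) 0) (pd (getidx (fun i => a (s i)) 1)
    (X (tailidx a s r t))) p = W (s (inord 0)) (s (inord 1)).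
  rewrite !getidx_inord // /W /dd -(idx_of_enum (tailidx a s r t)).
  by apply: dd_perm => //; [rewrite size_map size_enum_ord | exact: tailidx_perm].
have i01 : (inord 0 : 'I_m.+2) != inord 1 by rewrite -(inj_eq val_inj) /= !inordK.
have pairs := sum_perm_at2 W i01.  (* step 4 *)
have size_A : size A = m.+2 by rewrite size_map size_enum_ord.
have twice := twice_dd p Xsmooth Xsym Xaff r t size_A.  (* step 3 *)
rewrite sum_distinct_pairs -/A in twice.
have lhs : pd r (pd t (X a)) p = dd X p r t A by rewrite /dd /A idx_of_enum.
rewrite /sum_perm (eq_bigr _ (fun s _ => summand s)) lhs.
move: pairs twice.
set S := \big[Rplus/0]_(s : 'S_m.+2) _.
set P := \big[Rplus/0]_(i : 'I_m.+2) _.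
set D := dd X p r t A => pairs twice.
have fact_neq0 := @INR_fact_neq0 m.+2.
have -> : INR m.+2 * (INR m.+2 - 1) / 2 * (/ INR (m.+2)`! * S) =
          INR m.+2 * (INR m.+2 - 1) * S / (2 * INR (m.+2)`!) by field.
by rewrite pairs -twice; field.
Qed.
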